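(* For every $l\in\mathbb N$, the real curve $\Gamma_l(\mathbb R)=\{(\lambda,\mu)\in\mathbb R^2:P_l(\lambda,\mu^2)=0\}$ has no ovals in the affine plane $\mathbb R^2_{(\lambda,\mu)}$, and (its projective closure) has no ovals contained in the closure of the half-plane $\{\mu>0\}$ in the projective plane $\mathbb{RP}^2\supset\mathbb R^2_{(\lambda,\mu)}$.
   Context: For $l\in\mathbb N$ and $\mu\in\mathbb C$, $H_l$ is the tridiagonal $l\times l$ matrix with entries $H_{l;jj}=(1-j)(l-j+1)$, $H_{l;j,j+1}=\mu j$, $H_{l;j,j-1}=\mu(l-j+1)$, and $H_{l;ij}=0$ if $|i-j|\geq 2$; $\det(H_l+\lambda\,\mathrm{Id})$ is a polynomial of degree $l$ in $(\lambda,\mu^2)$, written $P_l(\lambda,\mu^2)$. An oval of a real planar projective algebraic curve $\Gamma$ is a subset of $\Gamma$ that is analytically parametrized by a circle, the parametrization being bijective except possibly at singular points of the curve (an oval may contain singular points, and the parametrization may have zero derivative at some of them). *)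

From Stdlib Require Import Reals.
From mathcomp Require Import all_boot all_algebra.
From mathcomp Require Import Rstruct.

Set Implicit Arguments.
Unset Strict Implicit.
Unset Printing Implicit Defensive.

Import GRing.Theory.
Local Open Scope ring_scope.

(* H_l (mu) : l x l tridiagonal; MathComp index i : 'I_l corresponds to the
   paper's index j = i+1.
   H_{jj} = (1-j)(l-j+1) = -i (l-i),
   H_{j,j+1} = mu j = mu (i+1)      (entry (i, i+1)),
   H_{j,j-1} = mu (l-j+1) = mu (l-i) (entry (i, i-1)). *)
Definition Hmat (l : nat) (mu : R) : 'M[R]_l :=
  \matrix_(i < l, k < l)
    (if (k == i :> nat) then (- (i%:R) * (l%:R - i%:R))%R
     else if (k == i.+1 :> nat) then (mu * (i.+1)%:R)%R
     else if (i == k.+1 :> nat) then (mu * (l%:R - i%:R))%R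
     else 0%R).

(* Fdet l lam mu = det (H_l + lam Id) = P_l(lam, mu^2). *)
Definition Fdet (l : nat) (lam mu : R) : R :=
  \det (Hmat l mu + lam%:M)%R.

(* Homogenization of Fdet l in (x : y : z), with lam = x/z, mu = y/z:
   det (x Id + y A + z D) where A is the off-diagonal part (coefficient of mu)
   and D the diagonal part of H_l.  It is homogeneous of degree l and
   Ghom l lam mu 1 = Fdet l lam mu; since its leading form det(x Id + y A) is
   nonzero, this is the homogenization of P_l(lam, mu^2) (of total degree l),
   i.e. the defining polynomial of the projective closure of Gamma_l. *)
Definition Ghom (l : nat) (x y z : R) : R :=
  \det (\matrix_(i < l, k < l)
    (if (k == i :> nat) then (x + z * (- (i%:R) * (l%:R - i%:R)))%R
     else if (k == i.+1 :> nat) then (y * (i.+1)%:R)%R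
     else if (i == k.+1 :> nat) then (y * (l%:R - i%:R))%R
     else 0%R) : 'M[R]_l).

Local Close Scope ring_scope.
Local Open Scope R_scope.

Definition real_analytic (f : R -> R) : Prop :=
  forall t0 : R, exists (a : nat -> R) (r : R), 0 < r /\
    forall t : R, Rabs (t - t0) < r ->
      Un_cv (fun N => sum_f_R0 (fun n => a n * (t - t0) ^ n) N) (f t).

Definition on_affine_curve (l : nat) (lam mu : R) : Prop := Fdet l lam mu = 0.

Definition affine_singular (l : nat) (lam mu : R) : Prop :=
  Fdet l lam mu = 0 /\
  derivable_pt_lim (fun s => Fdet l s mu) lam 0 /\
  derivable_pt_lim (fun s => Fdet l lam s) mu 0.

(* The circle is R/Z; a parametrization is a 1-periodic pair (u, v) of
   real-analytic functions; it is bijective from [0,1) onto its image except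
   possibly over singular points, and the image is not a single point. *)
Definition affine_oval (l : nat) (O : R -> R -> Prop) : Prop :=
  exists u v : R -> R,
    real_analytic u /\ real_analytic v /\
    (forall t, u (t + 1) = u t /\ v (t + 1) = v t) /\
    (forall lam mu, O lam mu <-> exists t, 0 <= t < 1 /\ u t = lam /\ v t = mu) /\
    (forall t, on_affine_curve l (u t) (v t)) /\
    (exists s t, (u s, v s) <> (u t, v t)) /\
    (forall s t, 0 <= s < 1 -> 0 <= t < 1 -> s <> t ->
       u s = u t -> v s = v t -> affine_singular l (u s) (v s)).

(* points of RP^2 are nonzero triples (x,y,z) up to nonzero scaling;
   the affine chart is (lam, mu) |-> (lam : mu : 1). *)
Definition nonzero3 (x y z : R) : Prop := ~ (x = 0 /\ y = 0 /\ z = 0).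

Definition proj_eq (x y z x' y' z' : R) : Prop :=
  y * z' - z * y' = 0 /\ z * x' - x * z' = 0 /\ x * y' - y * x' = 0.

Definition on_proj_curve (l : nat) (x y z : R) : Prop := Ghom l x y z = 0.

Definition proj_singular (l : nat) (x y z : R) : Prop :=
  Ghom l x y z = 0 /\
  derivable_pt_lim (fun s => Ghom l s y z) x 0 /\
  derivable_pt_lim (fun s => Ghom l x s z) y 0 /\
  derivable_pt_lim (fun s => Ghom l x y s) z 0.

(* An analytic loop R/Z -> RP^2 is given by a nowhere-zero real-analytic lift
   g = (g1,g2,g3) : R -> R^3 with g(t+1) = g(t) or g(t+1) = -g(t)
   (the latter for one-sided loops).  A projective oval is given by the set of
   representatives (x,y,z) of the points of its image. *)
Definition proj_oval (l : nat) (O : R -> R -> R -> Prop) : Prop :=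
  exists g1 g2 g3 : R -> R,
    real_analytic g1 /\ real_analytic g2 /\ real_analytic g3 /\
    (forall t, nonzero3 (g1 t) (g2 t) (g3 t)) /\
    ((forall t, g1 (t + 1) = g1 t /\ g2 (t + 1) = g2 t /\ g3 (t + 1) = g3 t) \/
     (forall t, g1 (t + 1) = - g1 t /\ g2 (t + 1) = - g2 t /\ g3 (t + 1) = - g3 t)) /\
    (forall x y z, O x y z <->
       nonzero3 x y z /\
       exists t, 0 <= t < 1 /\ proj_eq x y z (g1 t) (g2 t) (g3 t)) /\
    (forall t, on_proj_curve l (g1 t) (g2 t) (g3 t)) /\
    (exists s t, ~ proj_eq (g1 s) (g2 s) (g3 s) (g1 t) (g2 t) (g3 t)) /\
    (forall s t, 0 <= s < 1 -> 0 <= t < 1 -> s <> t ->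
       proj_eq (g1 s) (g2 s) (g3 s) (g1 t) (g2 t) (g3 t) ->
       proj_singular l (g1 s) (g2 s) (g3 s)).

(* Closure in RP^2 of the half-plane {mu > 0} = {y/z > 0}:
   the points with y z >= 0 together with the whole line at infinity z = 0. *)
Definition closed_upper_half (x y z : R) : Prop := z = 0 \/ 0 <= y * z.

(* The homogenized determinant det (x Id + y A + z D) of P_l is a continuant:
   its leading minors satisfy a three-term recurrence whose off-diagonal
   products y^2 i (l - i) are positive when y <> 0.  They therefore form a
   Sturm sequence, so at a real point of the curve with y <> 0 the root in x is
   simple: such points are nonsingular and, near them, each line
   {(y, z) = const} meets the curve only once.  On a closed loop in the curve,
   a suitable coordinate (mu on the affine curve, z / y on an oval inside
   {y z >= 0}) attains an extremum; at a point with y <> 0 the loop would then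
   fold back and pass twice through a nonsingular point.  Hence the loop stays
   in {y = 0}, which meets the curve in finitely many points, and a continuous
   loop there is constant. *)

From Stdlib Require Import Reals Lra Lia ZArith.
From Coquelicot Require Import Coquelicot.
From mathcomp Require all_boot all_algebra zify ring Rstruct.
Local Open Scope R_scope.

(** * Continuants *)

(* [continuant a b k x] is the determinant of the k x k tridiagonal matrix with
   diagonal entries [x + a i] and entries at (i - 1, i), (i, i - 1) multiplying
   to [b i]; [continuant' a b k x] is its derivative in [x]. *)
Section Continuant.

Variables a b : nat -> R.

Fixpoint continuant (k : nat) (x : R) : R :=
  match k with
  | O => 1
  | S k' =>
      match k' with
      | O => x + a 0
      | S k'' => (x + a k') * continuant k' x - b k' * continuant k'' x
      end
  end.

Fixpoint continuant' (k : nat) (x : R) : R :=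
  match k with
  | O => 0
  | S k' =>
      match k' with
      | O => 1
      | S k'' => continuant k' x + (x + a k') * continuant' k' x - b k' * continuant' k'' x
      end
  end.

Lemma continuant_SS k x :
  continuant (S (S k)) x = (x + a (S k)) * continuant (S k) x - b (S k) * continuant k x.
Proof. reflexivity. Qed.

Lemma continuant'_SS k x :
  continuant' (S (S k)) x =
  continuant (S k) x + (x + a (S k)) * continuant' (S k) x - b (S k) * continuant' k x.
Proof. reflexivity. Qed.

Lemma derivable_pt_lim_continuant k x :
  derivable_pt_lim (continuant k) x (continuant' k x).
Proof.
assert (Hlin : forall c, derivable_pt_lim (fun s => s + c) x (1 + 0)).
{ intro c. apply (derivable_pt_lim_plus id (fun _ => c));
    [apply derivable_pt_lim_id | apply derivable_pt_lim_const]. }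
enough (H : derivable_pt_lim (continuant k) x (continuant' k x) /\
            derivable_pt_lim (continuant (S k)) x (continuant' (S k) x)) by apply H.
induction k as [|k [H0 H1]].
- split; [apply derivable_pt_lim_const|].
  replace (continuant' 1 x) with (1 + 0) by (simpl; ring). apply Hlin.
- split; [exact H1|].
  replace (continuant' (S (S k)) x) with
    ((1 + 0) * continuant (S k) x + (x + a (S k)) * continuant' (S k) x
     - (0 * continuant k x + b (S k) * continuant' k x))
    by (rewrite continuant'_SS; ring).
  apply (derivable_pt_lim_minus (fun s => (s + a (S k)) * continuant (S k) s)
                                (fun s => b (S k) * continuant k s)).
  + apply (derivable_pt_lim_mult (fun s => s + a (S k))); [apply Hlin | exact H1].
  + apply (derivable_pt_lim_mult (fun _ => b (S k))); [apply derivable_pt_lim_const | exact H0].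
Qed.

Definition wronskian (k : nat) (x : R) : R :=
  continuant' (S k) x * continuant k x - continuant (S k) x * continuant' k x.

Lemma wronskian_S k x :
  wronskian (S k) x = continuant (S k) x ^ 2 + b (S k) * wronskian k x.
Proof. unfold wronskian. rewrite continuant'_SS, continuant_SS. ring. Qed.

Lemma wronskian_pos n x :
  (forall i, (0 < i <= n)%nat -> 0 < b i) -> 0 < wronskian n x.
Proof.
intro Hb. induction n as [|n IH].
- unfold wronskian; simpl; lra.
- rewrite wronskian_S.
  assert (0 < b (S n) * wronskian n x).
  { apply Rmult_lt_0_compat; [apply Hb; lia | apply IH; intros i Hi; apply Hb; lia]. }
  pose proof (pow2_ge_0 (continuant (S n) x)). lra.
Qed.

Lemma continuant_root_simple n x :
  (forall i, (0 < i <= n)%nat -> 0 < b i) -> continuant (S n) x = 0 ->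
  continuant' (S n) x <> 0 /\ continuant n x <> 0.
Proof.
intros Hb Hx. pose proof (wronskian_pos n x Hb) as HW.
unfold wronskian in HW. rewrite Hx in HW.
split; intro E; rewrite E in HW; lra.
Qed.

(* Where [continuant n] does not vanish, [continuant (S n) / continuant n] has
   derivative [wronskian n / continuant n ^ 2 > 0], so it is increasing. *)
Lemma continuant_roots_separated n s1 s2 :
  (forall i, (0 < i <= n)%nat -> 0 < b i) -> s1 < s2 ->
  (forall s, s1 <= s <= s2 -> continuant n s <> 0) ->
  continuant (S n) s1 = 0 -> continuant (S n) s2 = 0 -> False.
Proof.
intros Hb Hs Hne H1 H2.
set (F := fun s => continuant (S n) s / continuant n s).
set (F' := fun s => wronskian n s / continuant n s ^ 2).
destruct (MVT_cor2 F F' s1 s2 Hs) as [c [Hc Hc']].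
- intros c Hc. unfold F, F'.
  replace (wronskian n c / continuant n c ^ 2) with
    ((continuant' (S n) c * continuant n c - continuant' n c * continuant (S n) c)
     / (continuant n c)²)
    by (unfold wronskian, Rsqr; field; apply Hne, Hc).
  apply derivable_pt_lim_div; [apply derivable_pt_lim_continuant.. | apply Hne, Hc].
- unfold F in Hc. rewrite H1, H2 in Hc.
  assert (Hc0 : continuant n c <> 0) by (apply Hne; lra).
  assert (0 < F' c * (s2 - s1)).
  { apply Rmult_lt_0_compat; [|lra].
    apply Rdiv_lt_0_compat; [apply wronskian_pos, Hb|].
    apply pow2_gt_0, Hc0. }
  unfold Rdiv in Hc. lra.
Qed.

Lemma continuant_root_diagonal k x :
  (forall i, b i = 0) -> continuant k x = 0 -> exists i, (i < k)%nat /\ x + a i = 0.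
Proof.
intro Hb. induction k as [|k IH]; intro Hk.
- simpl in Hk. lra.
- assert (E : continuant (S k) x = (x + a k) * continuant k x)
    by (destruct k; [simpl; ring | rewrite continuant_SS, Hb; ring]).
  rewrite E in Hk. destruct (Rmult_integral _ _ Hk) as [Hi|Hi].
  + exists k. split; [lia | exact Hi].
  + destruct (IH Hi) as [i [Hik Hi']]. exists i. split; [lia | exact Hi'].
Qed.

End Continuant.

Lemma continuant_scale (a b a' b' : nat -> R) c k x :
  (forall i, a' i = c * a i) -> (forall i, b' i = c ^ 2 * b i) ->
  continuant a' b' k (c * x) = c ^ k * continuant a b k x.
Proof.
intros Ha Hb.
enough (H : continuant a' b' k (c * x) = c ^ k * continuant a b k x /\
            continuant a' b' (S k) (c * x) = c ^ S k * continuant a b (S k) x)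
  by apply H.
induction k as [|k [IH0 IH1]].
- simpl. rewrite Ha. split; ring.
- split; [exact IH1|].
  rewrite !continuant_SS, IH0, IH1, Ha, Hb. simpl. ring.
Qed.

(** * The leading minors of x Id + y A + z D *)

Definition weight (l i : nat) : R := INR i * (INR l - INR i).

(* [lead_minor l k x y z] is the leading principal k x k minor of the
   matrix [x Id + y A + z D] whose l x l determinant is [Ghom l x y z]. *)
Definition lead_minor (l k : nat) (x y z : R) : R :=
  continuant (fun i => - z * weight l i) (fun i => y ^ 2 * weight l i) k x.

Module Tridiagonal.
Import all_boot all_algebra zify ring Rstruct GRing.Theory.
Local Open Scope ring_scope.

Definition tridiag {R : nzRingType} n (d e f : nat -> R) : 'M[R]_n :=
  \matrix_(i < n, j < n)
    (if j == i :> nat then d i else if j == i.+1 :> nat then e i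
     else if i == j.+1 :> nat then f i else 0).

Lemma tridiag_lead_minor (R : nzRingType) n (d e f : nat -> R) :
  row' ord_max (col' ord_max (tridiag n.+1 d e f)) = tridiag n d e f.
Proof.
apply/matrixP => i j; rewrite !mxE /=.
by rewrite /bump (leqNgt n i) (leqNgt n j) !ltn_ord.
Qed.

Lemma det_tridiag_second_minor (R : comNzRingType) n (d e f : nat -> R) :
  \det (row' ord_max (col' (widen_ord (leqnSn n.+1) ord_max) (tridiag n.+2 d e f))) =
  e n * \det (tridiag n d e f).
Proof.
set M := row' _ _.
rewrite (expand_det_col _ ord_max) big_ord_recr /= big1 ?add0r; last first.
  move=> i _; rewrite !mxE /= /bump.
  have := ltn_ord i; do 3 (case: eqP => [?|_]; first lia).
  by rewrite mul0r.
rewrite !mxE /= /bump leqnn ltnn add1n add0n (eqn_leq n.+1 n) ltnn /= eqxx.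
congr (_ * _); rewrite /cofactor /= -signr_odd addnn odd_double expr0 mul1r.
congr (\det _); apply/matrixP => i j; rewrite !mxE /=.
have Fi : (n <= i)%N = false by rewrite leqNgt ltn_ord.
have Fj : (n <= j)%N = false by rewrite leqNgt ltn_ord.
have Gi : (n < i)%N = false by rewrite ltnNge ltnW.
by rewrite /bump Fi Fj !add0n Fj Gi.
Qed.

Lemma det_tridiag_recr (R : comNzRingType) n (d e f : nat -> R) :
  \det (tridiag n.+2 d e f) =
  d n.+1 * \det (tridiag n.+1 d e f) - e n * f n.+1 * \det (tridiag n d e f).
Proof.
rewrite (expand_det_row _ ord_max) !big_ord_recr /= big1 ?add0r; last first.
  move=> j _; rewrite !mxE /=.
  have := ltn_ord j; do 3 (case: eqP => [?|_]; first lia).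
  by rewrite mul0r.
rewrite !mxE /= !eqxx (ltn_eqF (ltnSn n)) (ltn_eqF (leqnSn n.+1)).
have -> : cofactor (tridiag n.+2 d e f) ord_max ord_max = \det (tridiag n.+1 d e f).
  by rewrite /cofactor tridiag_lead_minor -signr_odd addnn odd_double expr0 mul1r.
have -> : cofactor (tridiag n.+2 d e f) ord_max (widen_ord (leqnSn n.+1) ord_max) =
          - (e n * \det (tridiag n d e f)).
  rewrite /cofactor det_tridiag_second_minor /=.
  by rewrite -signr_odd addSn addnn /= odd_double expr1 mulN1r.
ring.
Qed.

Lemma det_tridiag_continuant n (d e f a b : nat -> R) x :
  (forall i, d i = x + a i) -> (forall i, e i * f i.+1 = b i.+1) ->
  \det (tridiag n d e f) = continuant a b n x.
Proof.
move=> Hd Hb.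
suff : \det (tridiag n d e f) = continuant a b n x /\
       \det (tridiag n.+1 d e f) = continuant a b n.+1 x by case.
elim: n => [|n [IH0 IH1]].
  by rewrite det_mx00 det_mx11 mxE eqxx Hd /= !RealsE.
split => //.
by rewrite det_tridiag_recr IH0 IH1 continuant_SS Hd -Hb !RealsE; ring.
Qed.

Local Close Scope ring_scope.

Lemma Ghom_lead_minor l x y z : Ghom l x y z = lead_minor l l x y z.
Proof.
apply: (@det_tridiag_continuant l (fun i => x + z * (- i%:R * (l%:R - i%:R)))%R
          (fun i => y * i.+1%:R)%R (fun i => y * (l%:R - i%:R))%R) => i;
  rewrite /weight !RealsE; ring.
Qed.

Lemma Fdet_lead_minor l lam mu : Fdet l lam mu = lead_minor l l lam mu 1.
Proof.
rewrite /Fdet.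
have -> : (Hmat l mu + lam%:M =
           tridiag l (fun i => lam + 1 * (- i%:R * (l%:R - i%:R)))
                     (fun i => mu * i.+1%:R) (fun i => mu * (l%:R - i%:R)))%R.
  apply/matrixP => i j; rewrite !mxE.
  case: (i =P j) => [<-|/eqP Hij]; first by rewrite !eqxx mulr1n mul1r addrC.
  rewrite mulr0n addr0 (_ : (j == i :> nat) = false) //.
  by apply/negbTE; rewrite eq_sym.
rewrite /lead_minor; apply: det_tridiag_continuant => i; rewrite /weight !RealsE; ring.
Qed.

End Tridiagonal.

Lemma weight_pos l i : (0 < i < l)%nat -> 0 < weight l i.
Proof.
intro Hi. unfold weight. apply Rmult_lt_0_compat.
- apply lt_0_INR. lia.
- apply Rlt_0_minus, lt_INR. lia.
Qed.

Lemma lead_minor_scale l k c x y z :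
  lead_minor l k (c * x) (c * y) (c * z) = c ^ k * lead_minor l k x y z.
Proof. apply continuant_scale; intro i; ring. Qed.

Lemma lead_minor_y0_root l k x z :
  lead_minor l k x 0 z = 0 -> exists i, (i < k)%nat /\ x = z * weight l i.
Proof.
intro H. assert (H0 : forall i, 0 ^ 2 * weight l i = 0) by (intro; ring).
destruct (continuant_root_diagonal _ _ k x H0 H) as [i [Hi Hx]].
exists i. split; [exact Hi | lra].
Qed.

Lemma lead_minor_continuous l k (p : R * (R * R)) :
  continuous (fun q => lead_minor l k (fst q) (fst (snd q)) (snd (snd q))) p.
Proof.
assert (Cx : continuous (fun q : R * (R * R) => fst q) p).
{ apply continuous_fst. }
assert (Cy : continuous (fun q : R * (R * R) => fst (snd q)) p).
{ apply (continuous_comp (fun q : R * (R * R) => snd q) fst);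
    [apply continuous_snd | apply continuous_fst]. }
assert (Cz : continuous (fun q : R * (R * R) => snd (snd q)) p).
{ apply (continuous_comp (fun q : R * (R * R) => snd q) snd);
    [apply continuous_snd | apply continuous_snd]. }
assert (Cdiag : forall i, continuous
          (fun q : R * (R * R) => fst q + - snd (snd q) * weight l i) p).
{ intro i. apply (continuous_plus (fun q : R * (R * R) => fst q)); [exact Cx|].
  apply (continuous_mult (fun q : R * (R * R) => - snd (snd q)));
    [apply (continuous_opp (fun q : R * (R * R) => snd (snd q))), Cz
    | apply continuous_const]. }
enough (H : continuous (fun q => lead_minor l k (fst q) (fst (snd q)) (snd (snd q))) p /\
    continuous (fun q => lead_minor l (S k) (fst q) (fst (snd q)) (snd (snd q))) p)
  by apply H.
induction k as [|k [IH0 IH1]].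
- split; [apply continuous_const | apply Cdiag].
- split; [exact IH1|].
  apply (continuous_minus
    (fun q : R * (R * R) => (fst q + - snd (snd q) * weight l (S k)) *
       lead_minor l (S k) (fst q) (fst (snd q)) (snd (snd q)))
    (fun q : R * (R * R) => fst (snd q) ^ 2 * weight l (S k) *
       lead_minor l k (fst q) (fst (snd q)) (snd (snd q)))).
  + apply (continuous_mult (fun q : R * (R * R) => fst q + - snd (snd q) * weight l (S k)));
      [apply Cdiag | exact IH1].
  + apply (continuous_mult (fun q : R * (R * R) => fst (snd q) ^ 2 * weight l (S k)));
      [|exact IH0].
    apply (continuous_mult (fun q : R * (R * R) => fst (snd q) ^ 2)); [|apply continuous_const].
    apply (continuous_mult (fun q : R * (R * R) => fst (snd q))); [exact Cy|].
    apply (continuous_mult (fun q : R * (R * R) => fst (snd q))); [exact Cy|apply continuous_const].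
Qed.

Lemma lead_minor_offdiag_pos l y i :
  y <> 0 -> (0 < i < l)%nat -> 0 < y ^ 2 * weight l i.
Proof. intros Hy Hi. apply Rmult_lt_0_compat; [apply pow2_gt_0, Hy | apply weight_pos, Hi]. Qed.

Lemma lead_minor_critical_y0 l x y z :
  lead_minor l l x y z = 0 ->
  derivable_pt_lim (fun s => lead_minor l l s y z) x 0 -> y = 0.
Proof.
intros H0 Hd. destruct l as [|n]; [simpl in H0; lra|].
destruct (Req_dec y 0) as [|Hy]; [assumption | exfalso].
destruct (continuant_root_simple (fun i => - z * weight (S n) i)
           (fun i => y ^ 2 * weight (S n) i) n x) with (2 := H0) as [Hd' _].
- intros i Hi. apply lead_minor_offdiag_pos; [exact Hy | lia].
- apply Hd', (uniqueness_limite (fun s => lead_minor (S n) (S n) s y z) x); [|exact Hd].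
  apply derivable_pt_lim_continuant.
Qed.

Lemma lead_minor_dehomogenize l x y z :
  y <> 0 -> lead_minor l l x y z = 0 -> lead_minor l l (x / y) 1 (z / y) = 0.
Proof.
intros Hy H. pose proof (lead_minor_scale l l (/ y) x y z) as E.
rewrite H, Rmult_0_r, Rinv_l in E by exact Hy.
unfold Rdiv. rewrite (Rmult_comm x), (Rmult_comm z). exact E.
Qed.

Lemma lead_minor_sturm_near_root n x0 y0 z0 :
  y0 <> 0 -> lead_minor (S n) (S n) x0 y0 z0 = 0 ->
  exists d, 0 < d /\ forall s y z,
    Rabs (s - x0) < d -> Rabs (y - y0) < d -> Rabs (z - z0) < d ->
    y <> 0 /\ lead_minor (S n) n s y z <> 0.
Proof.
intros Hy0 H0.
destruct (continuant_root_simple (fun i => - z0 * weight (S n) i)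
           (fun i => y0 ^ 2 * weight (S n) i) n x0) with (2 := H0) as [_ Hm0].
{ intros i Hi. apply lead_minor_offdiag_pos; [exact Hy0 | lia]. }
pose proof (lead_minor_continuous (S n) n (x0, (y0, z0))) as Hc.
apply filterlim_locally with (eps := mkposreal _ (Rabs_pos_lt _ Hm0)) in Hc.
destruct Hc as [d Hd].
exists (Rmin d (Rabs y0)). split; [apply Rmin_pos; [apply cond_pos | apply Rabs_pos_lt, Hy0]|].
intros s y z Hs Hy Hz. pose proof (Rmin_l d (Rabs y0)). pose proof (Rmin_r d (Rabs y0)).
split.
- intros ->. rewrite Rminus_0_l, Rabs_Ropp in Hy. lra.
- intro Es. specialize (Hd (s, (y, z)) (conj (Rlt_le_trans _ _ _ Hs (Rmin_l _ _))
                          (conj (Rlt_le_trans _ _ _ Hy (Rmin_l _ _))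
                                (Rlt_le_trans _ _ _ Hz (Rmin_l _ _))))).
  change (Rabs (lead_minor (S n) n s y z - lead_minor (S n) n x0 y0 z0)
          < Rabs (lead_minor (S n) n x0 y0 z0)) in Hd.
  rewrite Es, Rminus_0_l, Rabs_Ropp in Hd. lra.
Qed.

Lemma lead_minor_local_root_unique l x0 y0 z0 :
  y0 <> 0 -> lead_minor l l x0 y0 z0 = 0 ->
  exists d, 0 < d /\ forall s1 s2 y z,
    Rabs (s1 - x0) < d -> Rabs (s2 - x0) < d -> Rabs (y - y0) < d -> Rabs (z - z0) < d ->
    lead_minor l l s1 y z = 0 -> lead_minor l l s2 y z = 0 -> s1 = s2.
Proof.
intros Hy0 H0. destruct l as [|n]; [simpl in H0; lra|].
destruct (lead_minor_sturm_near_root n x0 y0 z0 Hy0 H0) as [d [Hd Hnear]].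
exists d. split; [exact Hd|].
assert (Hsep : forall s1 s2 y z, s1 < s2 ->
    Rabs (s1 - x0) < d -> Rabs (s2 - x0) < d -> Rabs (y - y0) < d -> Rabs (z - z0) < d ->
    lead_minor (S n) (S n) s1 y z = 0 -> lead_minor (S n) (S n) s2 y z = 0 -> False).
{ intros s1 s2 y z Hs H1 H2 Hy Hz E1 E2.
  destruct (Hnear s1 y z H1 Hy Hz) as [Hy' _].
  apply (continuant_roots_separated (fun i => - z * weight (S n) i)
           (fun i => y ^ 2 * weight (S n) i) n s1 s2) with (2 := Hs) (4 := E1) (5 := E2).
  - intros i Hi. apply lead_minor_offdiag_pos; [exact Hy' | lia].
  - intros s Hs'. apply (Hnear s y z); [|exact Hy | exact Hz].
    apply Rabs_def1; apply Rabs_def2 in H1; apply Rabs_def2 in H2; lra. }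
intros s1 s2 y z H1 H2 Hy Hz E1 E2.
destruct (Rtotal_order s1 s2) as [Hs|[Hs|Hs]]; [exfalso | exact Hs | exfalso].
- exact (Hsep s1 s2 y z Hs H1 H2 Hy Hz E1 E2).
- exact (Hsep s2 s1 y z Hs H2 H1 Hy Hz E2 E1).
Qed.

Lemma lead_minor_curve_fold l (xi eta zeta : R -> R) t0 :
  continuity_pt xi t0 -> continuity_pt eta t0 -> continuity_pt zeta t0 ->
  eta t0 <> 0 -> lead_minor l l (xi t0) (eta t0) (zeta t0) = 0 ->
  exists d, 0 < d /\ forall t1 t2, Rabs (t1 - t0) < d -> Rabs (t2 - t0) < d ->
    lead_minor l l (xi t1) (eta t1) (zeta t1) = 0 ->
    lead_minor l l (xi t2) (eta t2) (zeta t2) = 0 ->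
    eta t1 = eta t2 -> zeta t1 = zeta t2 -> xi t1 = xi t2.
Proof.
intros Cxi Ceta Czeta Heta H0.
destruct (lead_minor_local_root_unique l _ _ _ Heta H0) as [d [Hd Huniq]].
assert (Hnear : locally t0 (fun t => Rabs (xi t - xi t0) < d /\
                  Rabs (eta t - eta t0) < d /\ Rabs (zeta t - zeta t0) < d)).
{ rewrite continuity_pt_locally in Cxi, Ceta, Czeta.
  repeat apply filter_and; [apply (Cxi (mkposreal d Hd)) | apply (Ceta (mkposreal d Hd))
                            | apply (Czeta (mkposreal d Hd))]. }
destruct Hnear as [e He]. exists e. split; [apply cond_pos|].
intros t1 t2 H1 H2 E1 E2 Heta12 Hzeta12.
destruct (He t1 H1) as [A1 [B1 C1]]. destruct (He t2 H2) as [A2 _].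
apply (Huniq _ _ (eta t1) (zeta t1) A1 A2 B1 C1 E1).
rewrite Heta12, Hzeta12. exact E2.
Qed.

(** * Continuous and periodic real functions *)

Lemma continuity_pt_fun_const c t : continuity_pt (fun _ => c) t.
Proof. apply continuity_pt_const. intros ? ?. reflexivity. Qed.

Lemma continuity_pt_pow2 f t : continuity_pt f t -> continuity_pt (fun s => f s ^ 2) t.
Proof.
intro Cf. apply (continuity_pt_mult f (fun s => f s * 1)); [exact Cf|].
apply (continuity_pt_mult f (fun _ => 1)); [exact Cf | apply continuity_pt_fun_const].
Qed.

Lemma real_analytic_continuous f : real_analytic f -> forall t, continuity_pt f t.
Proof.
intros Hf t0. destruct (Hf t0) as [a [r [Hr Hsum]]].
assert (Hrad : Rbar_le (r / 2) (CV_radius a)).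
{ apply Rbar_not_lt_le. intro Hlt. apply (CV_disk_outside a (r / 2)).
  - rewrite Rabs_pos_eq by lra. exact Hlt.
  - pose proof (Hsum (t0 + r / 2)) as Hs. replace (t0 + r / 2 - t0) with (r / 2) in Hs by ring.
    apply ex_series_lim_0. exists (f (t0 + r / 2)). apply is_series_Reals, Hs.
    rewrite Rabs_pos_eq; lra. }
apply continuity_pt_ext_loc with (f := fun t => PSeries a (t - t0)).
- exists (mkposreal r Hr). intros t Ht. unfold PSeries. apply is_series_unique.
  apply is_series_Reals, Hsum, Ht.
- apply (continuity_pt_comp (fun t => t - t0) (PSeries a)).
  + apply continuity_pt_minus; [apply continuity_pt_id | apply continuity_pt_fun_const].
  + apply PSeries_continuity. rewrite Rminus_diag, Rabs_R0.
    eapply Rbar_lt_le_trans; [|exact Hrad]. simpl. lra.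
Qed.

Lemma IVT_between f a b v :
  a <= b -> (forall s, a <= s <= b -> continuity_pt f s) ->
  (f a - v) * (f b - v) <= 0 -> exists c, a <= c <= b /\ f c = v.
Proof.
intros Hab Hc Hv.
destruct (Req_dec (f a) v) as [Ea|Ea]; [exists a; split; [lra | exact Ea]|].
destruct (Req_dec (f b) v) as [Eb|Eb]; [exists b; split; [lra | exact Eb]|].
assert (Hlt : a < b) by (destruct (Req_dec a b) as [->|]; [nra | lra]).
destruct (Rlt_or_le (f a) v) as [Ha|Ha].
- destruct (Ranalysis5.IVT_interv (fun s => f s - v) a b) as [c [Hc1 Hc2]];
    [|exact Hlt | lra | nra |].
  + intros s Hs. apply continuity_pt_minus; [apply Hc, Hs | apply continuity_pt_fun_const].
  + exists c. split; [exact Hc1 | lra].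
- destruct (Ranalysis5.IVT_interv (fun s => v - f s) a b) as [c [Hc1 Hc2]];
    [|exact Hlt | lra | nra |].
  + intros s Hs. apply continuity_pt_minus; [apply continuity_pt_fun_const | apply Hc, Hs].
  + exists c. split; [exact Hc1 | lra].
Qed.

Lemma local_extremum_not_injective f t0 d :
  0 < d -> (forall s, t0 - d <= s <= t0 + d -> continuity_pt f s) ->
  (forall s, t0 - d <= s <= t0 + d -> f t0 <= f s) \/
  (forall s, t0 - d <= s <= t0 + d -> f s <= f t0) ->
  exists t1 t2, t0 - d <= t1 /\ t1 < t2 /\ t2 <= t0 + d /\ f t1 = f t2.
Proof.
intros Hd Hc Hext.
assert (Hmin : forall g, (forall s, t0 - d <= s <= t0 + d -> continuity_pt g s) ->
  (forall s, t0 - d <= s <= t0 + d -> g t0 <= g s) ->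
  exists t1 t2, t0 - d <= t1 /\ t1 < t2 /\ t2 <= t0 + d /\ g t1 = g t2).
{ intros g Hg Hm.
  pose proof (Hm (t0 - d) ltac:(lra)). pose proof (Hm (t0 + d) ltac:(lra)).
  destruct (Rle_or_lt (g (t0 - d)) (g (t0 + d))).
  - destruct (IVT_between g t0 (t0 + d) (g (t0 - d))) as [c [Hc1 Hc2]];
      [lra | intros s Hs; apply Hg; lra | nra |].
    exists (t0 - d), c. repeat split; lra.
  - destruct (IVT_between g (t0 - d) t0 (g (t0 + d))) as [c [Hc1 Hc2]];
      [lra | intros s Hs; apply Hg; lra | nra |].
    exists c, (t0 + d). repeat split; lra. }
destruct Hext as [Hm|Hm]; [exact (Hmin f Hc Hm)|].
destruct (Hmin (fun s => - f s)) as [t1 [t2 [H1 [H2 [H3 H4]]]]].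
- intros s Hs. apply continuity_pt_opp, Hc, Hs.
- intros s Hs. pose proof (Hm s Hs). lra.
- exists t1, t2. repeat split; [exact H1 | exact H2 | exact H3 | lra].
Qed.

Lemma exists_avoiding (e : nat -> R) n a b :
  a < b -> exists w, a < w < b /\ forall i, (i < n)%nat -> w <> e i.
Proof.
revert b. induction n as [|n IH]; intros b Hab.
- exists ((a + b) / 2). split; [lra | intros; lia].
- assert (Hcase : a < e n < b \/ ~ a < e n < b)
    by (destruct (Rlt_dec a (e n)); destruct (Rlt_dec (e n) b); [left | right..]; lra).
  destruct Hcase as [Hin|Hout].
  + destruct (IH (e n) (proj1 Hin)) as [w [Hw Hne]]. exists w. split; [lra|].
    intros i Hi. destruct (Nat.eq_dec i n) as [->|]; [lra | apply Hne; lia].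
  + destruct (IH b Hab) as [w [Hw Hne]]. exists w. split; [exact Hw|].
    intros i Hi. destruct (Nat.eq_dec i n) as [->|]; [|apply Hne; lia].
    intro E. apply Hout. rewrite <- E. exact Hw.
Qed.

Lemma continuous_finite_range_const (r : R -> R) (e : nat -> R) n :
  (forall t, continuity_pt r t) -> (forall t, exists i, (i < n)%nat /\ r t = e i) ->
  forall s t, r s = r t.
Proof.
intros Hc Hr.
assert (Hle : forall s t, s <= t -> r s = r t).
{ intros s t Hst. destruct (Req_dec (r s) (r t)) as [|Hne]; [assumption | exfalso].
  destruct (exists_avoiding e n (Rmin (r s) (r t)) (Rmax (r s) (r t))) as [w [Hw Hav]].
  { unfold Rmin, Rmax. destruct (Rle_dec (r s) (r t)); lra. }
  destruct (IVT_between r s t w Hst) as [c [_ Hcw]].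
  - intros; apply Hc.
  - unfold Rmin, Rmax in Hw. destruct (Rle_dec (r s) (r t)); nra.
  - destruct (Hr c) as [i [Hi Hci]]. apply (Hav i Hi). congruence. }
intros s t. destruct (Rle_or_lt s t); [apply Hle; assumption | symmetry; apply Hle; lra].
Qed.

Lemma exists_small_radius e1 e2 :
  0 < e1 -> 0 < e2 -> exists d, 0 < d /\ d < e1 /\ d < e2 /\ 2 * d < 1.
Proof.
intros He1 He2. exists (Rmin e1 (Rmin e2 1) / 3).
unfold Rmin. destruct (Rle_dec e2 1); destruct (Rle_dec e1 _); lra.
Qed.

Lemma shift_invariant_Z (P : R -> Prop) :
  (forall t, P (t + 1) <-> P t) -> forall k t, P (t + IZR k) <-> P t.
Proof.
intros HP.
assert (Hnat : forall n t, P (t + INR n) <-> P t).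
{ induction n as [|n IH]; intro t; [rewrite Rplus_0_r; reflexivity|].
  rewrite S_INR, <- Rplus_assoc, HP. apply IH. }
intros k t. destruct (Z.le_ge_cases 0 k) as [Hk|Hk].
- rewrite <- (Z2Nat.id k Hk), <- INR_IZR_INZ. apply Hnat.
- rewrite <- (Hnat (Z.to_nat (- k)) (t + IZR k)), INR_IZR_INZ, Z2Nat.id, opp_IZR by lia.
  replace (t + IZR k + - IZR k) with t by ring. reflexivity.
Qed.

Lemma exists_shift_unit_interval t : exists k, 0 <= t + IZR k < 1.
Proof.
exists (- Int_part t)%Z. rewrite opp_IZR. destruct (base_Int_part t). lra.
Qed.

Lemma shifts_distinct t1 t2 k1 k2 : t1 < t2 < t1 + 1 -> t1 + IZR k1 <> t2 + IZR k2.
Proof.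
intros Ht E.
assert (Hk : IZR (k1 - k2) = t2 - t1) by (rewrite minus_IZR; lra).
assert (0 < k1 - k2 < 1)%Z by (split; apply lt_IZR; lra).
lia.
Qed.

Lemma periodic_shift_Z {T : Type} (f : R -> T) :
  (forall t, f (t + 1) = f t) -> forall k t, f (t + IZR k) = f t.
Proof.
intros Hp k t. apply (shift_invariant_Z (fun s => f s = f t)); [intro s; rewrite Hp|]; reflexivity.
Qed.

Lemma periodic_attains_max q :
  (forall t, continuity_pt q t) -> (forall t, q (t + 1) = q t) ->
  exists t0, forall t, q t <= q t0.
Proof.
intros Hc Hp.
destruct (continuity_ab_maj q 0 1) as [M [HM _]]; [lra | intros; apply Hc|].
exists M. intro t. destruct (exists_shift_unit_interval t) as [k Hk].
rewrite <- (periodic_shift_Z q Hp k t). apply HM. lra.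
Qed.

(** * Loops on the curve *)

Lemma affine_singular_on_axis l lam mu : affine_singular l lam mu -> mu = 0.
Proof.
intros [H0 [Hd _]]. rewrite Tridiagonal.Fdet_lead_minor in H0.
apply (lead_minor_critical_y0 l lam mu 1 H0).
apply derivable_pt_lim_ext with (f := fun s => Fdet l s mu); [|exact Hd].
intro s. apply Tridiagonal.Fdet_lead_minor.
Qed.

Lemma proj_singular_on_axis l x y z : proj_singular l x y z -> y = 0.
Proof.
intros [H0 [Hd _]]. rewrite Tridiagonal.Ghom_lead_minor in H0.
apply (lead_minor_critical_y0 l x y z H0).
apply derivable_pt_lim_ext with (f := fun s => Ghom l s y z); [|exact Hd].
intro s. apply Tridiagonal.Ghom_lead_minor.
Qed.

Section AffineLoop.

Variables (l : nat) (u v : R -> R).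
Hypothesis u_cont : forall t, continuity_pt u t.
Hypothesis v_cont : forall t, continuity_pt v t.
Hypothesis u_periodic : forall t, u (t + 1) = u t.
Hypothesis v_periodic : forall t, v (t + 1) = v t.
Hypothesis uv_on_curve : forall t, lead_minor l l (u t) (v t) 1 = 0.
Hypothesis uv_double_points_on_axis : forall s t, 0 <= s < 1 -> 0 <= t < 1 -> s <> t ->
  u s = u t -> v s = v t -> v s = 0.

Lemma affine_loop_double_point t1 t2 :
  t1 < t2 < t1 + 1 -> u t1 = u t2 -> v t1 = v t2 -> v t1 = 0.
Proof.
intros Ht Eu Ev.
destruct (exists_shift_unit_interval t1) as [k1 Hk1].
destruct (exists_shift_unit_interval t2) as [k2 Hk2].
rewrite <- (periodic_shift_Z v v_periodic k1 t1).
apply (uv_double_points_on_axis _ _ Hk1 Hk2 (shifts_distinct t1 t2 k1 k2 Ht));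
  rewrite !periodic_shift_Z; assumption.
Qed.

Lemma affine_loop_extremum_on_axis t0 :
  (forall s, v t0 <= v s) \/ (forall s, v s <= v t0) -> v t0 = 0.
Proof.
intro Hext. destruct (Req_dec (v t0) 0) as [|Hv0]; [assumption | exfalso].
destruct (continuous_neq_0 v t0 (v_cont t0) Hv0) as [e1 He1].
destruct (lead_minor_curve_fold l u v (fun _ => 1) t0) as [e2 [He2 Hfold]];
  [apply u_cont | apply v_cont | apply continuity_pt_fun_const
  | exact Hv0 | apply uv_on_curve |].
destruct (exists_small_radius e1 e2 (cond_pos e1) He2) as [d [Hd0 [Hd1 [Hd2 Hd3]]]].
destruct (local_extremum_not_injective v t0 d) as [t1 [t2 [H1 [H2 [H3 Ev]]]]].
- exact Hd0.
- intros; apply v_cont.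
- destruct Hext as [Hm|Hm]; [left | right]; intros s _; apply Hm.
- apply (He1 (t1 - t0)); [apply Rabs_def1; lra|].
  replace (t0 + (t1 - t0)) with t1 by ring.
  apply affine_loop_double_point with t2; [split; lra | | exact Ev].
  apply Hfold; [apply Rabs_def1; lra | apply Rabs_def1; lra
               | apply uv_on_curve | apply uv_on_curve | exact Ev | reflexivity].
Qed.

Lemma affine_loop_on_axis t : v t = 0.
Proof.
destruct (periodic_attains_max v v_cont v_periodic) as [tM HM].
destruct (periodic_attains_max (fun s => - v s)) as [tm Hm].
- intro s. apply continuity_pt_opp, v_cont.
- intro s. rewrite v_periodic. reflexivity.
- pose proof (affine_loop_extremum_on_axis tM (or_intror HM)).
  assert (v tm = 0).
  { apply affine_loop_extremum_on_axis. left. intro s. pose proof (Hm s). lra. }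
  pose proof (HM t). pose proof (Hm t). lra.
Qed.

Lemma affine_loop_constant s t : (u s, v s) = (u t, v t).
Proof.
rewrite (affine_loop_on_axis s), (affine_loop_on_axis t). f_equal.
apply (continuous_finite_range_const u (weight l) l u_cont).
intro t'. pose proof (uv_on_curve t') as H. rewrite affine_loop_on_axis in H.
destruct (lead_minor_y0_root l l _ _ H) as [i [Hi E]].
exists i. split; [exact Hi | lra].
Qed.

End AffineLoop.

Definition proportional (x y z x' y' z' : R) : Prop :=
  exists c, c <> 0 /\ x' = c * x /\ y' = c * y /\ z' = c * z.

Lemma proportional_refl x y z : proportional x y z x y z.
Proof. exists 1. repeat split; [lra | ring..]. Qed.

Lemma proportional_sym x y z x' y' z' :
  proportional x y z x' y' z' -> proportional x' y' z' x y z.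
Proof.
intros [c [Hc [-> [-> ->]]]]. exists (/ c).
split; [apply Rinv_neq_0_compat, Hc|]. repeat split; field; exact Hc.
Qed.

Lemma proportional_trans x y z x' y' z' x'' y'' z'' :
  proportional x y z x' y' z' -> proportional x' y' z' x'' y'' z'' ->
  proportional x y z x'' y'' z''.
Proof.
intros [c [Hc [-> [-> ->]]]] [c' [Hc' [-> [-> ->]]]]. exists (c' * c).
split; [apply Rmult_integral_contrapositive; tauto | repeat split; ring].
Qed.

Lemma proj_eq_of_proportional x y z x' y' z' :
  proportional x y z x' y' z' -> proj_eq x y z x' y' z'.
Proof. intros [c [_ [-> [-> ->]]]]. unfold proj_eq. repeat split; ring. Qed.

Lemma proj_eq_scale c c' x y z x' y' z' :
  proj_eq x y z x' y' z' -> proj_eq (c * x) (c * y) (c * z) (c' * x') (c' * y') (c' * z').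
Proof.
unfold proj_eq. intros [E1 [E2 E3]].
repeat split; [rewrite <- (Rmult_0_r (c * c')), <- E1 | rewrite <- (Rmult_0_r (c * c')), <- E2
              | rewrite <- (Rmult_0_r (c * c')), <- E3]; ring.
Qed.

Lemma proj_eq_of_ratios x y z x' y' z' :
  y <> 0 -> y' <> 0 -> x / y = x' / y' -> z / y = z' / y' -> proj_eq x y z x' y' z'.
Proof.
intros Hy Hy' Ex Ez.
assert (Ex' : x' = x / y * y') by (rewrite Ex; field; exact Hy').
assert (Ez' : z' = z / y * y') by (rewrite Ez; field; exact Hy').
unfold proj_eq. rewrite Ex', Ez'. repeat split; field; exact Hy.
Qed.

Lemma ratio_le_of_sq_frac_le y0 z0 y z :
  y0 <> 0 -> y <> 0 -> 0 <= y0 * z0 -> 0 <= y * z ->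
  y ^ 2 / (y ^ 2 + z ^ 2) <= y0 ^ 2 / (y0 ^ 2 + z0 ^ 2) -> z0 / y0 <= z / y.
Proof.
intros Hy0 Hy Hyz0 Hyz H.
assert (Hfrac : forall y z, y <> 0 -> y ^ 2 / (y ^ 2 + z ^ 2) = / (1 + (z / y) ^ 2)).
{ intros y' z' Hy'. pose proof (pow2_gt_0 y' Hy'). pose proof (pow2_ge_0 z').
  field. split; [exact Hy' | lra]. }
assert (Hnn : forall y z, y <> 0 -> 0 <= y * z -> 0 <= z / y).
{ intros y' z' Hy' Hyz'. replace (z' / y') with (y' * z' / y' ^ 2) by (field; exact Hy').
  apply Rdiv_le_0_compat; [exact Hyz' | apply pow2_gt_0, Hy']. }
rewrite (Hfrac y z Hy), (Hfrac y0 z0 Hy0) in H.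
pose proof (Hnn _ _ Hy0 Hyz0). pose proof (Hnn _ _ Hy Hyz).
set (a := z0 / y0) in *. set (b := z / y) in *.
destruct (Rle_or_lt (1 + a ^ 2) (1 + b ^ 2)) as [Hle|Hlt]; [nra | exfalso].
apply Rinv_lt_contravar in Hlt; [lra|].
pose proof (pow2_ge_0 a). pose proof (pow2_ge_0 b). nra.
Qed.

Section ProjectiveLoop.

Variables (l : nat) (X Y Z : R -> R).
Hypothesis X_cont : forall t, continuity_pt X t.
Hypothesis Y_cont : forall t, continuity_pt Y t.
Hypothesis Z_cont : forall t, continuity_pt Z t.
Hypothesis g_nonzero : forall t, nonzero3 (X t) (Y t) (Z t).
Hypothesis g_periodic : forall t,
  proportional (X t) (Y t) (Z t) (X (t + 1)) (Y (t + 1)) (Z (t + 1)).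
Hypothesis g_on_curve : forall t, lead_minor l l (X t) (Y t) (Z t) = 0.
Hypothesis g_double_points_on_axis : forall s t, 0 <= s < 1 -> 0 <= t < 1 -> s <> t ->
  proj_eq (X s) (Y s) (Z s) (X t) (Y t) (Z t) -> Y s = 0.
Hypothesis g_upper : forall t, 0 <= Y t * Z t.

Lemma proj_loop_shift_Z k t :
  proportional (X t) (Y t) (Z t) (X (t + IZR k)) (Y (t + IZR k)) (Z (t + IZR k)).
Proof.
apply (shift_invariant_Z (fun s => proportional (X t) (Y t) (Z t) (X s) (Y s) (Z s)));
  [intro s; split; intro H | apply proportional_refl].
- eapply proportional_trans; [exact H | apply proportional_sym, g_periodic].
- eapply proportional_trans; [exact H | apply g_periodic].
Qed.

Lemma proj_loop_yz_pos t : 0 < Y t ^ 2 + Z t ^ 2.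
Proof.
destruct (Req_dec (Y t) 0) as [EY|EY]; [destruct (Req_dec (Z t) 0) as [EZ|EZ]|].
- exfalso. pose proof (g_on_curve t) as H. rewrite EY, EZ in H.
  destruct (lead_minor_y0_root l l _ _ H) as [i [_ EX]].
  apply (g_nonzero t). repeat split; [lra | exact EY | exact EZ].
- pose proof (pow2_gt_0 _ EZ). pose proof (pow2_ge_0 (Y t)). lra.
- pose proof (pow2_gt_0 _ EY). pose proof (pow2_ge_0 (Z t)). lra.
Qed.

Lemma proj_loop_double_point t1 t2 :
  t1 < t2 < t1 + 1 -> proj_eq (X t1) (Y t1) (Z t1) (X t2) (Y t2) (Z t2) -> Y t1 = 0.
Proof.
intros Ht E.
destruct (exists_shift_unit_interval t1) as [k1 Hk1].
destruct (exists_shift_unit_interval t2) as [k2 Hk2].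
destruct (proj_loop_shift_Z k1 t1) as [c1 [Hc1 [E1x [E1y E1z]]]].
destruct (proj_loop_shift_Z k2 t2) as [c2 [Hc2 [E2x [E2y E2z]]]].
assert (H : Y (t1 + IZR k1) = 0).
{ apply (g_double_points_on_axis _ _ Hk1 Hk2 (shifts_distinct t1 t2 k1 k2 Ht)).
  rewrite E1x, E1y, E1z, E2x, E2y, E2z. apply proj_eq_scale, E. }
rewrite E1y in H. destruct (Rmult_integral _ _ H); [contradiction | assumption].
Qed.

Lemma proj_loop_ratio_not_min t0 :
  Y t0 <> 0 -> ~ (forall s, Y s <> 0 -> Z t0 / Y t0 <= Z s / Y s).
Proof.
intros HY0 Hmin.
destruct (continuous_neq_0 Y t0 (Y_cont t0) HY0) as [e1 He1].
destruct (lead_minor_curve_fold l (fun t => X t / Y t) (fun _ => 1) (fun t => Z t / Y t) t0)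
  as [e2 [He2 Hfold]];
  [apply continuity_pt_div; auto | apply continuity_pt_fun_const
  | apply continuity_pt_div; auto | lra | apply lead_minor_dehomogenize; auto |].
destruct (exists_small_radius e1 e2 (cond_pos e1) He2) as [d [Hd0 [Hd1 [Hd2 Hd3]]]].
assert (HY : forall t, t0 - d <= t <= t0 + d -> Y t <> 0).
{ intros t Ht. replace t with (t0 + (t - t0)) by ring. apply He1, Rabs_def1; lra. }
destruct (local_extremum_not_injective (fun t => Z t / Y t) t0 d) as [t1 [t2 [H1 [H2 [H3 Ez]]]]].
- exact Hd0.
- intros t Ht. apply continuity_pt_div; auto.
- left. intros s Hs. apply Hmin, HY, Hs.
- apply (HY t1); [lra|]. apply proj_loop_double_point with t2; [split; lra|].
  apply proj_eq_of_ratios; [apply HY; lra | apply HY; lra | | exact Ez].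
  apply Hfold; [apply Rabs_def1; lra | apply Rabs_def1; lra
               | apply lead_minor_dehomogenize; [apply HY; lra | apply g_on_curve]..
               | reflexivity | exact Ez].
Qed.

Lemma proj_loop_on_axis_degenerate :
  (forall t, Y t = 0) -> forall s t, proj_eq (X s) (Y s) (Z s) (X t) (Y t) (Z t).
Proof.
intros HY.
assert (HZ : forall t, Z t <> 0).
{ intros t EZ. pose proof (proj_loop_yz_pos t). rewrite HY, EZ in *. lra. }
assert (Hconst : forall s t, X s / Z s = X t / Z t).
{ apply (continuous_finite_range_const (fun t => X t / Z t) (weight l) l).
  - intro t. apply continuity_pt_div; auto.
  - intro t. pose proof (g_on_curve t) as H. rewrite HY in H.
    destruct (lead_minor_y0_root l l _ _ H) as [i [Hi EX]].
    exists i. split; [exact Hi|]. rewrite EX. field. apply HZ. }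
intros s t. unfold proj_eq. rewrite !HY. repeat split; try ring.
pose proof (Hconst s t) as E.
replace (X t) with (X s / Z s * Z t) by (rewrite E; field; apply HZ).
field. apply HZ.
Qed.

Lemma proj_loop_degenerate s t : proj_eq (X s) (Y s) (Z s) (X t) (Y t) (Z t).
Proof.
(* Where y <> 0, y^2 / (y^2 + z^2) is largest where z / y >= 0 is smallest. *)
set (q := fun t => Y t ^ 2 / (Y t ^ 2 + Z t ^ 2)).
destruct (periodic_attains_max q) as [tM HM].
- intro t'. apply continuity_pt_div;
    [apply continuity_pt_pow2, Y_cont
    | apply continuity_pt_plus; apply continuity_pt_pow2; [apply Y_cont | apply Z_cont]
    | apply Rgt_not_eq, proj_loop_yz_pos].
- intro t'. unfold q. destruct (g_periodic t') as [c [Hc [_ [-> ->]]]].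
  pose proof (proj_loop_yz_pos t').
  replace ((c * Y t') ^ 2 + (c * Z t') ^ 2) with (c ^ 2 * (Y t' ^ 2 + Z t' ^ 2)) by ring.
  field. split; [lra | exact Hc].
- destruct (Req_dec (Y tM) 0) as [EY|EY].
  + apply proj_loop_on_axis_degenerate. intro t'.
    assert (HqM : q tM = 0) by (unfold q; rewrite EY; unfold Rdiv; ring).
    pose proof (HM t') as H. rewrite HqM in H. unfold q in H.
    pose proof (proj_loop_yz_pos t').
    apply Rmult_le_compat_r with (r := Y t' ^ 2 + Z t' ^ 2) in H; [|lra].
    replace (Y t' ^ 2 / (Y t' ^ 2 + Z t' ^ 2) * (Y t' ^ 2 + Z t' ^ 2)) with (Y t' ^ 2) in H
      by (field; lra).
    nra.
  + exfalso. apply (proj_loop_ratio_not_min tM EY). intros s' Hs'.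
    apply ratio_le_of_sq_frac_le; auto. apply HM.
Qed.

End ProjectiveLoop.

Lemma no_affine_oval l : ~ exists O, affine_oval l O.
Proof.
intros [O [u [v [Hu [Hv [Hper [_ [Hc [[s [t Hst]] Hdouble]]]]]]]]].
apply Hst, (affine_loop_constant l u v).
- apply real_analytic_continuous, Hu.
- apply real_analytic_continuous, Hv.
- intro t'. apply Hper.
- intro t'. apply Hper.
- intro t'. rewrite <- Tridiagonal.Fdet_lead_minor. apply Hc.
- intros s' t' Hs' Ht' Hst' Eu Ev.
  apply (affine_singular_on_axis l (u s')), (Hdouble s' t' Hs' Ht' Hst' Eu Ev).
Qed.

Lemma no_upper_proj_oval l :
  ~ exists O, proj_oval l O /\ (forall x y z, O x y z -> closed_upper_half x y z).
Proof.
intros [O [[X [Y [Z [HX [HY [HZ [Hnz [Hper [HO [Hc [[s [t Hst]] Hdouble]]]]]]]]]]] Hup]].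
assert (Hprop : forall t, proportional (X t) (Y t) (Z t) (X (t + 1)) (Y (t + 1)) (Z (t + 1))).
{ intro t'. destruct Hper as [Hp|Hp]; destruct (Hp t') as [-> [-> ->]];
    [apply proportional_refl | exists (-1); repeat split; [lra | ring..]]. }
apply Hst, (proj_loop_degenerate l X Y Z); try assumption.
- apply real_analytic_continuous, HX.
- apply real_analytic_continuous, HY.
- apply real_analytic_continuous, HZ.
- intro t'. rewrite <- Tridiagonal.Ghom_lead_minor. apply Hc.
- intros s' t' Hs' Ht' Hst' E.
  apply (proj_singular_on_axis l (X s') _ (Z s')), (Hdouble s' t' Hs' Ht' Hst' E).
- intro t'. destruct (exists_shift_unit_interval t') as [k Hk].
  assert (Ht' : O (X t') (Y t') (Z t')).
  { apply HO. split; [apply Hnz|]. exists (t' + IZR k). split; [exact Hk|].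
    apply proj_eq_of_proportional.
    apply (proj_loop_shift_Z X Y Z Hprop). }
  destruct (Hup _ _ _ Ht') as [E|E]; [rewrite E; lra | exact E].
Qed.

Theorem theorem1p8 : forall l : nat,
  (~ exists O : R -> R -> Prop, affine_oval l O) /\
  (~ exists O : R -> R -> R -> Prop, proj_oval l O /\
       (forall x y z, O x y z -> closed_upper_half x y z)).
Proof. intro l. split; [apply no_affine_oval | apply no_upper_proj_oval]. Qed.
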